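(* For every integer $n\ge 0$ with $n+k>0$ and every $x\in\mathbb{R}$, $$\Big(1-\frac{k^2}{(n+k)^2}\Big)E_n^k(x)=E_{-n}^k(-x)-\frac{k}{n+k}\,E_{-n}^k(x).$$
   Context: Fix $k\ge 0$. Partial order on $\mathbb{Z}$: $j\triangleleft n$ iff either ($|j|<|n|$ and $|n|-|j|$ is a positive even integer) or ($|j|=|n|$ and $n<j$). Let $\delta_k(x)=|2\sin x|^{2k}$ and $(f,g)_k=\frac{1}{2\pi}\int_0^{2\pi} f(x)\overline{g(x)}\delta_k(x)\,dx$. The non-symmetric Heckman–Opdam polynomials $E_n^k$, $n\in\mathbb{Z}$, are the functions on $\mathbb{R}$ of the form $E_n^k(x)=e^{nx}+\sum_{j\triangleleft n}c_{n,j}e^{jx}$ (finite sum) such that $(E_n^k(i\,\cdot),e^{ij\,\cdot})_k=0$ for all $j\triangleleft n$. *)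

From Stdlib Require Import Reals ZArith List.
From Coquelicot Require Import Coquelicot.
Open Scope R_scope.

Definition tri (j n : Z) : bool :=
  ((Z.abs j <? Z.abs n)%Z && Z.even (Z.abs n - Z.abs j))
  || ((Z.abs j =? Z.abs n)%Z && (n <? j)%Z).

(* The (finite) list of all j with j ◁ n; all such j satisfy |j| <= |n|. *)
Definition below (n : Z) : list Z :=
  filter (fun j => tri j n)
    (map (fun m => (Z.of_nat m - Z.abs n)%Z)
         (seq 0 (2 * Z.to_nat (Z.abs n) + 1))).

Definition Csum (l : list Z) (f : Z -> C) : C :=
  fold_right (fun j acc => Cplus (f j) acc) (RtoC 0) l.

(* a^b for a >= 0 with the convention 0^0 = 1, 0^b = 0 for b <> 0. *)
Definition rpow (a b : R) : R :=
  if Rle_dec a 0 then (if Req_EM_T b 0 then 1 else 0) else Rpower a b.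

Definition delta (k x : R) : R := rpow (Rabs (2 * sin x)) (2 * k).

Definition cis (t : R) : C := (cos t, sin t).

Definition ip (k : R) (f g : R -> C) : C :=
  Cmult (RtoC (/ (2 * PI)))
    (RInt (V := C_R_CompleteNormedModule)
       (fun x => Cmult (Cmult (f x) (Cconj (g x))) (RtoC (delta k x))) 0 (2 * PI)).

(* E is the non-symmetric Heckman–Opdam polynomial E_n^k :
   E(x) = e^{nx} + sum_{j ◁ n} c_j e^{jx}, and (E(i.), e^{ij.})_k = 0 for j ◁ n. *)
Definition IsHO (k : R) (n : Z) (E : R -> C) : Prop :=
  exists c : Z -> C,
    (forall x, E x = Cplus (RtoC (exp (IZR n * x)))
                           (Csum (below n) (fun j => Cmult (c j) (RtoC (exp (IZR j * x)))))) /\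
    (forall j, tri j n = true ->
       ip k (fun t => Cplus (cis (IZR n * t))
                            (Csum (below n) (fun l => Cmult (c l) (cis (IZR l * t)))))
            (fun t => cis (IZR j * t)) = RtoC 0).

(* For n > 0, expand E_n^k and E_{-n}^k in the exponentials e^{jx}, |j| <= n.  On such
   coefficient vectors (f, g)_k is the Gram form of the moments
   mu_m = (1/2pi) int cos(mt) delta_k(t) dt, which are even in m and satisfy
   (2k+1+m) mu_{m+1} + (2k+1-m) mu_{m-1} = 0.  This recurrence makes a triangular
   Cherednik-type operator D symmetric for the form.  E = E_n^k is an eigenvector of D up
   to terms lower for the order, and comparing (D R, E) with (R, D E) for the reflection
   R(x) = E(-x) gives (n+k) (R, e^n) + k (E, e^n) = 0.  So R + k/(n+k) E has leading term
   e^{-nx} and is orthogonal to every e^{jx} with j below -n; the form being positive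
   definite, it equals E_{-n}^k, and the theorem is this identity evaluated at -x and x. *)

From Stdlib Require Import Reals ZArith List Bool Lra Lia Permutation FunctionalExtensionality.
From Coquelicot Require Import Coquelicot.
Open Scope R_scope.
Local Open Scope bool_scope.

Ltac Cnorm := repeat progress rewrite ?plus_IZR, ?minus_IZR, ?opp_IZR, ?mult_IZR,
  ?RtoC_plus, ?RtoC_minus, ?RtoC_mult, ?RtoC_opp.

Ltac zsplit :=
  match goal with
  | |- context [Z.eqb ?a ?b] => destruct (Z.eqb_spec a b)
  | |- context [Z.ltb ?a ?b] => destruct (Z.ltb_spec a b)
  | |- context [Z.leb ?a ?b] => destruct (Z.leb_spec a b)
  end.

Ltac zdecide :=
  rewrite ?Zeven_mod;
  repeat (zsplit; cbn [andb orb negb]; try (intros ?; discriminate);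
          try (exfalso; Z.to_euclidean_division_equations; lia));
  intros.

Lemma C_eq_opp_0 (z : C) : z = (- z)%C -> z = RtoC 0.
Proof.
  destruct z as [a b]. unfold Copp. simpl. intros H. injection H as Ha Hb.
  apply injective_projections; simpl; lra.
Qed.

Lemma C_eq_of_plus_0 (x y z : C) : z = RtoC 0 -> x = (y + z)%C -> x = y.
Proof. intros -> ->. ring. Qed.

Lemma Csub_eq_0 (x y : C) : x = y -> (x - y)%C = RtoC 0.
Proof. intros ->. ring. Qed.

Lemma C_double_eq_0 (z : C) : (RtoC 2 * z)%C = RtoC 0 -> z = RtoC 0.
Proof.
  destruct z as [a b]. unfold Cmult. simpl. intros H. injection H as Ha Hb.
  apply injective_projections; simpl; lra.
Qed.

(** * Finite sums *)

Lemma Csum_plus l f g :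
  Csum l (fun j => f j + g j)%C = (Csum l f + Csum l g)%C.
Proof. induction l as [|a l IH]; simpl; [ring | rewrite IH; ring]. Qed.

Lemma Csum_scal_l l c f : Csum l (fun j => c * f j)%C = (c * Csum l f)%C.
Proof. induction l as [|a l IH]; simpl; [ring | rewrite IH; ring]. Qed.

Lemma Csum_scal_r l c f : Csum l (fun j => f j * c)%C = (Csum l f * c)%C.
Proof. induction l as [|a l IH]; simpl; [ring | rewrite IH; ring]. Qed.

Lemma Csum_opp l f : Csum l (fun j => - f j)%C = (- Csum l f)%C.
Proof. induction l as [|a l IH]; simpl; [ring | rewrite IH; ring]. Qed.

Lemma Csum_ext_in l f g : (forall j, In j l -> f j = g j) -> Csum l f = Csum l g.
Proof.
  induction l as [|a l IH]; intros H; simpl; [reflexivity|].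
  rewrite H, IH; auto using in_eq, in_cons.
Qed.

Lemma Csum_eq_0 l f : (forall j, In j l -> f j = RtoC 0) -> Csum l f = RtoC 0.
Proof.
  intros H. transitivity (Csum l (fun _ => RtoC 0)); [now apply Csum_ext_in|].
  induction l as [|a l IH]; simpl; [reflexivity | rewrite IH; [ring | auto using in_cons]].
Qed.

Lemma Csum_comm l l' (F : Z -> Z -> C) :
  Csum l (fun j => Csum l' (F j)) = Csum l' (fun i => Csum l (fun j => F j i)).
Proof.
  induction l as [|a l IH]; simpl.
  - symmetry; now apply Csum_eq_0.
  - now rewrite IH, <- Csum_plus.
Qed.

Lemma Csum_filter (p : Z -> bool) l f :
  Csum (filter p l) f = Csum l (fun j => if p j then f j else RtoC 0).
Proof. induction l as [|a l IH]; simpl; [reflexivity|]. destruct (p a); simpl; rewrite IH; ring. Qed.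

Lemma Csum_perm l l' f : Permutation l l' -> Csum l f = Csum l' f.
Proof. induction 1; simpl; try congruence; ring. Qed.

Lemma Csum_single l f m : NoDup l -> In m l ->
  (forall j, In j l -> j <> m -> f j = RtoC 0) -> Csum l f = f m.
Proof.
  induction l as [|a l IH]; intros Hnd Hin H; [destruct Hin|].
  inversion Hnd as [|? ? Ha Hl]; subst. simpl. destruct Hin as [<-|Hin].
  - rewrite Csum_eq_0; [ring|].
    intros j Hj. apply H; [now right | intros ->; contradiction].
  - rewrite H, IH; auto using in_eq, in_cons; [ring|].
    intros ->. contradiction.
Qed.

Lemma Cconj_Csum l f : Cconj (Csum l f) = Csum l (fun j => Cconj (f j)).
Proof.
  induction l as [|a l IH]; simpl; [apply injective_projections; simpl; ring|].
  now rewrite <- IH, Cplus_conj.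
Qed.

Definition zrange (n : Z) : list Z :=
  map (fun m => (Z.of_nat m - Z.abs n)%Z) (seq 0 (2 * Z.to_nat (Z.abs n) + 1)).

Lemma below_zrange n : below n = filter (fun j => tri j n) (zrange n).
Proof. reflexivity. Qed.

Lemma zrange_opp n : zrange (- n) = zrange n.
Proof. unfold zrange. now rewrite Z.abs_opp. Qed.

Lemma in_zrange n j : In j (zrange n) <-> (- Z.abs n <= j <= Z.abs n)%Z.
Proof.
  unfold zrange. rewrite in_map_iff. split.
  - intros [m [<- Hm]]. apply in_seq in Hm. lia.
  - intros H. exists (Z.to_nat (j + Z.abs n)). rewrite in_seq. lia.
Qed.

Lemma NoDup_zrange n : NoDup (zrange n).
Proof.
  apply FinFun.Injective_map_NoDup; [intros a b H; lia | apply seq_NoDup].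
Qed.

Lemma Csum_zrange_opp n f : Csum (zrange n) (fun j => f (- j)%Z) = Csum (zrange n) f.
Proof.
  change (fun j => f (- j)%Z) with (fun j => f (Z.opp j)).
  transitivity (Csum (map Z.opp (zrange n)) f).
  - clear. induction (zrange n); simpl; congruence.
  - apply Csum_perm, NoDup_Permutation.
    + apply FinFun.Injective_map_NoDup; [intros a b H; lia | apply NoDup_zrange].
    + apply NoDup_zrange.
    + intros x. rewrite in_map_iff, in_zrange. split.
      * intros [y [<- Hy]]. apply in_zrange in Hy. lia.
      * intros H. exists (- x)%Z. rewrite in_zrange. lia.
Qed.

Lemma Csum_zrange_single n m g : (Z.abs m <= Z.abs n)%Z ->
  Csum (zrange n) (fun j => if (j =? m)%Z then g j else RtoC 0) = g m.
Proof.
  intros Hm. rewrite (Csum_single _ _ m).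
  - now rewrite Z.eqb_refl.
  - apply NoDup_zrange.
  - apply in_zrange. lia.
  - intros j _ Hj. now apply Z.eqb_neq in Hj as ->.
Qed.

Lemma tri_refl n : tri n n = false.
Proof. unfold tri. rewrite Z.ltb_irrefl, Z.ltb_irrefl. now rewrite andb_false_r. Qed.

Lemma tri_pos n j : (0 < n)%Z -> tri j n = (Z.abs j <? n)%Z && Z.even (n - j).
Proof. intros Hn. unfold tri. zdecide; reflexivity. Qed.

Lemma tri_opp_pos n j : (0 < n)%Z -> tri j (- n) = tri j n || (j =? n)%Z.
Proof. intros Hn. rewrite (tri_pos n j Hn). unfold tri. zdecide; reflexivity. Qed.

Lemma tri_opp_l n j : (0 < n)%Z -> tri (- j) n = tri j n.
Proof. intros Hn. rewrite !tri_pos by lia. zdecide; reflexivity. Qed.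


(** * Sums along progressions of step 2 *)

Fixpoint ladder (g : Z -> C) (a : Z) (N : nat) : C :=
  match N with
  | O => RtoC 0
  | S N' => (g (a + 2)%Z + ladder g (a + 2) N')%C
  end.

Lemma ladder_add g a p q :
  ladder g a (p + q) = (ladder g a p + ladder g (a + 2 * Z.of_nat p)%Z q)%C.
Proof.
  revert a. induction p as [|p IH]; intros a; cbn [ladder Nat.add].
  - rewrite Z.add_0_r. ring.
  - rewrite IH. replace (a + 2 + 2 * Z.of_nat p)%Z with (a + 2 * Z.of_nat (S p))%Z by lia.
    ring.
Qed.

Lemma ladder_shift g a b N :
  ladder (fun j => g (j - b)%Z) a N = ladder g (a - b) N.
Proof.
  revert a. induction N as [|N IH]; intros a; cbn [ladder]; [reflexivity|].
  rewrite IH. now replace (a + 2 - b)%Z with (a - b + 2)%Z by lia.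
Qed.

(* [zladder g a N] is the sum of [g j] over a < j <= a + 2N, j = a mod 2, and minus the
   sum over a + 2N < j <= a when N < 0, so that it is additive in N ([zladder_add]). *)
Definition zladder (g : Z -> C) (a N : Z) : C :=
  if (0 <=? N)%Z then ladder g a (Z.to_nat N)
  else (- ladder g (a + 2 * N) (Z.to_nat (- N)))%C.

Lemma zladder_diff g a N B : (0 <= B)%Z -> (0 <= B + N)%Z ->
  zladder g a N =
  (ladder g (a - 2 * B) (Z.to_nat (B + N)) - ladder g (a - 2 * B) (Z.to_nat B))%C.
Proof.
  intros HB HBN. unfold zladder. destruct (Z.leb_spec 0 N).
  - replace (Z.to_nat (B + N)) with (Z.to_nat B + Z.to_nat N)%nat by lia.
    rewrite ladder_add.
    replace (a - 2 * B + 2 * Z.of_nat (Z.to_nat B))%Z with a by lia. ring.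
  - replace (Z.to_nat B) with (Z.to_nat (B + N) + Z.to_nat (- N))%nat by lia.
    rewrite ladder_add.
    replace (a - 2 * B + 2 * Z.of_nat (Z.to_nat (B + N)))%Z with (a + 2 * N)%Z by lia.
    ring.
Qed.

Lemma zladder_add g a N M :
  zladder g a (N + M) = (zladder g a N + zladder g (a + 2 * N) M)%C.
Proof.
  set (B := (Z.abs N + Z.abs M)%Z).
  rewrite (zladder_diff g a (N + M) B), (zladder_diff g a N B),
    (zladder_diff g (a + 2 * N) M (B + N)) by lia.
  replace (a + 2 * N - 2 * (B + N))%Z with (a - 2 * B)%Z by lia.
  replace (B + N + M)%Z with (B + (N + M))%Z by lia. ring.
Qed.

Lemma zladder_1 g a : zladder g a 1 = g (a + 2)%Z.
Proof. unfold zladder. simpl. ring. Qed.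

Lemma zladder_opp g a N : zladder g (a + 2 * N) (- N) = (- zladder g a N)%C.
Proof.
  assert (H := zladder_add g a N (- N)). rewrite Z.add_opp_diag_r in H.
  change (zladder g a 0) with (RtoC 0) in H.
  rewrite <- (Cplus_0_l (- zladder g a N)), H. ring.
Qed.

Lemma zladder_shift g a b N :
  zladder (fun j => g (j - b)%Z) a N = zladder g (a - b) N.
Proof.
  unfold zladder. rewrite !ladder_shift.
  now replace (a + 2 * N - b)%Z with (a - b + 2 * N)%Z by lia.
Qed.

Lemma zladder_peel g d :
  zladder g (- (d + 1)) (d + 1) =
  (g (- (d - 1))%Z + zladder g (- (d - 1)) (d - 1) + g (d + 1)%Z)%C.
Proof.
  assert (H1 := zladder_add g (- (d + 1)) 1 d).
  assert (H2 := zladder_add g (- (d - 1)) (d - 1) 1).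
  replace (1 + d)%Z with (d + 1)%Z in H1 by lia.
  replace (- (d + 1) + 2 * 1)%Z with (- (d - 1))%Z in H1 by lia.
  replace (d - 1 + 1)%Z with d in H2 by lia.
  replace (- (d - 1) + 2 * (d - 1))%Z with (d - 1)%Z in H2 by lia.
  rewrite H1, H2, !zladder_1.
  replace (- (d + 1) + 2)%Z with (- (d - 1))%Z by lia.
  replace (d - 1 + 2)%Z with (d + 1)%Z by lia. ring.
Qed.

Definition in_ladder (a N j : Z) : bool :=
  (a <? j)%Z && (j <=? a + 2 * N)%Z && Z.even (j - a).

Lemma Csum_in_ladder n g a N :
  (- Z.abs n <= a)%Z -> (a + 2 * Z.of_nat N <= Z.abs n)%Z ->
  Csum (zrange n) (fun j => if in_ladder a (Z.of_nat N) j then g j else RtoC 0)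
  = ladder g a N.
Proof.
  revert a. induction N as [|N IH]; intros a Ha HaN.
  - apply Csum_eq_0. intros j _. unfold in_ladder. zdecide; reflexivity.
  - cbn [ladder]. rewrite <- (Csum_zrange_single n (a + 2) g), <- IH by lia.
    rewrite <- Csum_plus. apply Csum_ext_in. intros j _.
    unfold in_ladder. zdecide; ring.
Qed.

Definition ladder_sign (m j : Z) : C :=
  if in_ladder (- m) m j then RtoC 1
  else if in_ladder m (- m) j then (- RtoC 1)%C else RtoC 0.

Lemma Csum_ladder_sign n g m : (Z.abs m <= Z.abs n)%Z ->
  Csum (zrange n) (fun j => ladder_sign m j * g j)%C = zladder g (- m) m.
Proof.
  intros Hm. unfold zladder. destruct (Z.leb_spec 0 m).
  - rewrite <- (Csum_in_ladder n) by lia. apply Csum_ext_in. intros j _.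
    rewrite Z2Nat.id by lia. unfold ladder_sign, in_ladder. zdecide; ring.
  - rewrite <- (Csum_in_ladder n) by lia. rewrite <- Csum_opp.
    apply Csum_ext_in. intros j _.
    rewrite Z2Nat.id by lia. unfold ladder_sign, in_ladder. zdecide; ring.
Qed.

(** * The moment form and the Cherednik operator *)

Section MomentForm.

Variables (k : R) (mu : Z -> C).
Hypothesis mu_opp : forall m, mu (- m)%Z = mu m.
Hypothesis mu_rec : forall m,
  (RtoC (2 * k + 1 + IZR m) * mu (m + 1)%Z
   + RtoC (2 * k + 1 - IZR m) * mu (m - 1)%Z)%C = RtoC 0.

Let ladder_balance d := (RtoC (IZR d) * mu d + RtoC (2 * k) * zladder mu (- d) d)%C.

Lemma ladder_balance_opp d : ladder_balance (- d) = (- ladder_balance d)%C.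
Proof.
  unfold ladder_balance. rewrite Z.opp_involutive, mu_opp.
  replace (zladder mu d (- d)) with (zladder mu (- d + 2 * d) (- d)) by (f_equal; lia).
  rewrite zladder_opp. Cnorm. ring.
Qed.

Lemma ladder_balance_step d : ladder_balance (d + 1) = ladder_balance (d - 1).
Proof.
  unfold ladder_balance. rewrite zladder_peel, mu_opp.
  apply (C_eq_of_plus_0 _ _ _ (mu_rec d)). Cnorm. ring.
Qed.

Lemma ladder_balance_eq_0 d : ladder_balance d = RtoC 0.
Proof.
  assert (H0 : ladder_balance 0 = RtoC 0).
  { unfold ladder_balance. change (zladder mu (- 0) 0) with (RtoC 0). ring. }
  assert (H1 : ladder_balance 1 = RtoC 0).
  { apply C_eq_opp_0. rewrite <- ladder_balance_opp. exact (ladder_balance_step 0). }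
  assert (Hnat : forall N : nat,
    ladder_balance (Z.of_nat N) = RtoC 0 /\ ladder_balance (Z.of_nat N + 1) = RtoC 0).
  { induction N as [|N [IH0 IH1]]; [split; assumption|].
    rewrite Nat2Z.inj_succ. split; [exact IH1|].
    rewrite ladder_balance_step.
    now replace (Z.succ (Z.of_nat N) - 1)%Z with (Z.of_nat N) by lia. }
  destruct (Z.le_gt_cases 0 d).
  - rewrite <- (Z2Nat.id d) by lia. apply Hnat.
  - rewrite <- (Z.opp_involutive d), ladder_balance_opp, <- (Z2Nat.id (- d)) by lia.
    rewrite (proj1 (Hnat _)). ring.
Qed.

Variable n : Z.

(* Column m is m e_m + 2k (sum of e_j over -m < j <= m, j = m mod 2, signed as in
   [zladder]): triangular for the order, and symmetric for the moment form
   ([gram_cherednik_op_sym]); nothing else about it is used. *)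
Definition cherednik (j m : Z) : C :=
  ((if (j =? m)%Z then RtoC (IZR m) else RtoC 0) + RtoC (2 * k) * ladder_sign m j)%C.

Definition cherednik_op (a : Z -> C) (j : Z) : C :=
  Csum (zrange n) (fun m => cherednik j m * a m)%C.

Definition gram (a b : Z -> C) : C :=
  Csum (zrange n) (fun j => Csum (zrange n) (fun l => a j * b l * mu (j - l)%Z))%C.

Definition gram_at (a : Z -> C) (i : Z) : C :=
  Csum (zrange n) (fun j => a j * mu (j - i)%Z)%C.

Lemma cherednik_gram m l : (Z.abs m <= Z.abs n)%Z ->
  Csum (zrange n) (fun j => cherednik j m * mu (j - l)%Z)%C
  = (RtoC (IZR m) * mu (m - l)%Z + RtoC (2 * k) * zladder mu (- m - l) m)%C.
Proof.
  intros Hm. unfold cherednik.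
  transitivity (Csum (zrange n) (fun j =>
    (if (j =? m)%Z then RtoC (IZR m) * mu (j - l)%Z else RtoC 0)
    + RtoC (2 * k) * (ladder_sign m j * mu (j - l)%Z))%C).
  { apply Csum_ext_in. intros j _. destruct (j =? m)%Z; ring. }
  rewrite Csum_plus, Csum_scal_l, Csum_zrange_single by exact Hm.
  rewrite (Csum_ladder_sign n (fun j => mu (j - l)%Z)), zladder_shift by exact Hm.
  reflexivity.
Qed.

Lemma cherednik_gram_sym m l : (Z.abs m <= Z.abs n)%Z -> (Z.abs l <= Z.abs n)%Z ->
  Csum (zrange n) (fun j => cherednik j m * mu (j - l)%Z)%C
  = Csum (zrange n) (fun j => cherednik j l * mu (j - m)%Z)%C.
Proof.
  intros Hm Hl. rewrite !cherednik_gram by assumption.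
  replace (zladder mu (- m - l) m) with (zladder mu (- l - m) (l + (m - l)))
    by (f_equal; lia).
  rewrite zladder_add.
  replace (- l - m + 2 * l)%Z with (- (m - l))%Z by lia.
  replace (l - m)%Z with (- (m - l))%Z by lia. rewrite mu_opp.
  apply (C_eq_of_plus_0 _ _ _ (ladder_balance_eq_0 (m - l))). unfold ladder_balance. Cnorm. ring.
Qed.

Lemma gram_sym a b : gram a b = gram b a.
Proof.
  unfold gram. rewrite Csum_comm. apply Csum_ext_in. intros j _.
  apply Csum_ext_in. intros l _.
  replace (l - j)%Z with (- (j - l))%Z by lia. rewrite mu_opp. ring.
Qed.

Lemma gram_at_sum a b :
  gram a b = Csum (zrange n) (fun l => b l * gram_at a l)%C.
Proof.
  unfold gram, gram_at. rewrite Csum_comm. apply Csum_ext_in. intros l _.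
  rewrite <- Csum_scal_l. apply Csum_ext_in. intros j _. ring.
Qed.

Lemma gram_ext_r a b b' : (forall j, In j (zrange n) -> b j = b' j) ->
  gram a b = gram a b'.
Proof. intros H. rewrite !gram_at_sum. apply Csum_ext_in. intros l Hl. now rewrite H. Qed.

Lemma gram_plus_r a b b' : gram a (fun j => b j + b' j)%C = (gram a b + gram a b')%C.
Proof.
  rewrite !gram_at_sum, <- Csum_plus. apply Csum_ext_in. intros l _. ring.
Qed.

Lemma gram_scal_r a c b : gram a (fun j => c * b j)%C = (c * gram a b)%C.
Proof.
  rewrite !gram_at_sum, <- Csum_scal_l. apply Csum_ext_in. intros l _. ring.
Qed.

Lemma gram_opp_l a b : gram (fun j => a (- j)%Z) b = gram a (fun j => b (- j)%Z).
Proof.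
  unfold gram. rewrite <- (Csum_zrange_opp n (fun j => Csum _ _)).
  apply Csum_ext_in. intros j _. rewrite <- Csum_zrange_opp.
  apply Csum_ext_in. intros l _. rewrite Z.opp_involutive.
  replace (- j - - l)%Z with (- (j - l))%Z by lia. now rewrite mu_opp.
Qed.

Lemma gram_at_opp a i : gram_at (fun j => a (- j)%Z) i = gram_at a (- i).
Proof.
  unfold gram_at. rewrite <- Csum_zrange_opp. apply Csum_ext_in. intros j _.
  rewrite Z.opp_involutive. replace (- j - i)%Z with (- (j - - i))%Z by lia.
  now rewrite mu_opp.
Qed.

Lemma gram_cherednik_op_l a b :
  gram (cherednik_op a) b = Csum (zrange n) (fun m => Csum (zrange n) (fun l =>
    a m * b l * Csum (zrange n) (fun j => cherednik j m * mu (j - l)%Z)))%C.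
Proof.
  unfold gram, cherednik_op.
  transitivity (Csum (zrange n) (fun j => Csum (zrange n) (fun m => Csum (zrange n)
    (fun l => cherednik j m * a m * b l * mu (j - l)%Z))))%C.
  { apply Csum_ext_in. intros j _. rewrite Csum_comm. apply Csum_ext_in. intros l _.
    rewrite <- !Csum_scal_r. apply Csum_ext_in. intros m _. ring. }
  rewrite Csum_comm. apply Csum_ext_in. intros m _. rewrite Csum_comm.
  apply Csum_ext_in. intros l _. rewrite <- Csum_scal_l. apply Csum_ext_in. intros j _.
  ring.
Qed.

Lemma gram_cherednik_op_sym a b : gram (cherednik_op a) b = gram a (cherednik_op b).
Proof.
  rewrite (gram_sym a), !gram_cherednik_op_l, (Csum_comm (zrange n)).
  apply Csum_ext_in. intros m Hm. apply Csum_ext_in. intros l Hl.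
  apply in_zrange in Hm, Hl. rewrite cherednik_gram_sym by lia. ring.
Qed.

Lemma cherednik_opp j m : cherednik j (- m) =
  (- cherednik (- j) m + RtoC (2 * k) * (if (m =? - j)%Z then RtoC 1 else RtoC 0)
   - RtoC (2 * k) * (if (m =? j)%Z then RtoC 1 else RtoC 0))%C.
Proof. unfold cherednik, ladder_sign, in_ladder. zdecide; Cnorm; ring. Qed.

Lemma cherednik_op_opp a j : In j (zrange n) ->
  cherednik_op (fun i => a (- i)%Z) j =
  (- cherednik_op a (- j) + RtoC (2 * k) * a (- j)%Z - RtoC (2 * k) * a j)%C.
Proof.
  intros Hj. apply in_zrange in Hj. unfold cherednik_op.
  transitivity (Csum (zrange n) (fun m => cherednik j (- m) * a m)%C).
  { rewrite <- Csum_zrange_opp. apply Csum_ext_in. intros m _.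
    now rewrite Z.opp_involutive. }
  transitivity (Csum (zrange n) (fun m =>
    - (cherednik (- j) m * a m)
    + RtoC (2 * k) * (if (m =? - j)%Z then a m else RtoC 0)
    + (- RtoC (2 * k)) * (if (m =? j)%Z then a m else RtoC 0))%C).
  { apply Csum_ext_in. intros m _. rewrite cherednik_opp.
    destruct (m =? - j)%Z, (m =? j)%Z; ring. }
  rewrite !Csum_plus, Csum_opp, !Csum_scal_l, !Csum_zrange_single by lia. ring.
Qed.

Section Eigenvector.

Hypothesis n_pos : (0 < n)%Z.
Variable e : Z -> C.
Hypothesis e_supp : forall j, j <> n -> tri j n = false -> e j = RtoC 0.

Lemma cherednik_tri j m : (m = n \/ tri m n = true) -> tri j n = false ->
  cherednik j m = if ((j =? n) && (m =? n))%Z then RtoC (IZR n + 2 * k) else RtoC 0.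
Proof.
  rewrite !tri_pos by exact n_pos. intros [->|Hm]; [|revert Hm];
    unfold cherednik, ladder_sign, in_ladder; zdecide; Cnorm; ring.
Qed.

Lemma cherednik_op_eigen j : In j (zrange n) -> tri j n = false ->
  cherednik_op e j = (RtoC (IZR n + 2 * k) * e j)%C.
Proof.
  intros Hj Htj. unfold cherednik_op.
  transitivity (Csum (zrange n) (fun m =>
    if (m =? n)%Z then (if (j =? n)%Z then RtoC (IZR n + 2 * k) * e m else RtoC 0)
    else RtoC 0)%C).
  { apply Csum_ext_in. intros m _.
    destruct (Z.eqb_spec m n) as [->|Hmn].
    - rewrite cherednik_tri by auto. rewrite Z.eqb_refl, andb_true_r.
      destruct (j =? n)%Z; ring.
    - destruct (tri m n) eqn:Htm.
      + rewrite cherednik_tri by auto. rewrite (proj2 (Z.eqb_neq m n) Hmn), andb_false_r.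
        ring.
      + rewrite e_supp by assumption. ring. }
  rewrite (Csum_zrange_single n n) by lia.
  destruct (Z.eqb_spec j n) as [->|Hjn]; [reflexivity|].
  rewrite e_supp by assumption. ring.
Qed.

Lemma gram_cherednik_op_eigen a : (forall l, tri l n = true -> gram_at a l = RtoC 0) ->
  gram a (cherednik_op e) = (RtoC (IZR n + 2 * k) * gram a e)%C.
Proof.
  intros Ha. rewrite !gram_at_sum, <- Csum_scal_l. apply Csum_ext_in. intros l Hl.
  destruct (tri l n) eqn:Htl.
  - rewrite Ha by assumption. ring.
  - rewrite cherednik_op_eigen by assumption. ring.
Qed.

Lemma gram_supported a : e n = RtoC 1 ->
  (forall l, tri l n = true -> gram_at a l = RtoC 0) -> gram a e = gram_at a n.
Proof.
  intros He Ha. rewrite gram_at_sum, (Csum_single _ _ n).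
  - rewrite He. ring.
  - apply NoDup_zrange.
  - apply in_zrange. lia.
  - intros l _ Hln. destruct (tri l n) eqn:Htl.
    + rewrite Ha by assumption. ring.
    + rewrite e_supp by assumption. ring.
Qed.

Hypothesis e_lead : e n = RtoC 1.
Hypothesis e_orth : forall i, tri i n = true -> gram_at e i = RtoC 0.

Lemma reflected_orth l : tri l n = true -> gram_at (fun j => e (- j)%Z) l = RtoC 0.
Proof.
  intros Hl. rewrite gram_at_opp. apply e_orth. now rewrite tri_opp_l by exact n_pos.
Qed.

(* Evaluate both sides of (D R, E) = (R, D E), R = E o (-), using [cherednik_op_opp]
   and the eigenvector property of E. *)
Lemma reflection_identity :
  (RtoC (IZR n + k) * gram (fun j => e (- j)%Z) e + RtoC k * gram e e)%C = RtoC 0.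
Proof.
  set (se := fun j => e (- j)%Z).
  assert (Hrefl : gram e (cherednik_op se) =
    (- RtoC 1 * gram e (fun j => cherednik_op e (- j)%Z)
     + (RtoC (2 * k) * gram e se + (- RtoC (2 * k)) * gram e e))%C).
  { rewrite <- !gram_scal_r, <- !gram_plus_r. apply gram_ext_r. intros j Hj.
    unfold se. rewrite cherednik_op_opp by exact Hj. ring. }
  rewrite <- gram_opp_l, (gram_sym e se) in Hrefl. fold se in Hrefl.
  rewrite (gram_sym e (cherednik_op se)), gram_cherednik_op_sym, (gram_cherednik_op_eigen se reflected_orth) in Hrefl.
  apply C_double_eq_0, (C_eq_of_plus_0 _ _ _ (Csub_eq_0 _ _ Hrefl)). Cnorm. ring.
Qed.

Lemma reflection_orth (Hnk : IZR n + k <> 0) i : tri i (- n) = true ->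
  gram_at (fun j => e (- j)%Z + RtoC (k / (IZR n + k)) * e j)%C i = RtoC 0.
Proof.
  rewrite tri_opp_pos by exact n_pos. intros Hi.
  transitivity (gram_at (fun j => e (- j)%Z) i
                + RtoC (k / (IZR n + k)) * gram_at e i)%C.
  { unfold gram_at. rewrite <- Csum_scal_l, <- Csum_plus.
    apply Csum_ext_in. intros j _. ring. }
  destruct (tri i n) eqn:Htn.
  - rewrite reflected_orth, e_orth by exact Htn. ring.
  - apply Z.eqb_eq in Hi. subst i.
    rewrite <- (gram_supported _ e_lead reflected_orth), <- (gram_supported _ e_lead e_orth),
      RtoC_div by exact Hnk.
    assert (Hnk' : RtoC (IZR n + k) <> RtoC 0) by (intros H; now apply RtoC_inj in H).
    transitivity (/ RtoC (IZR n + k) * (RtoC (IZR n + k) * gram (fun j => e (- j)%Z) e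
                                       + RtoC k * gram e e))%C.
    { field. exact Hnk'. }
    rewrite reflection_identity. ring.
Qed.

End Eigenvector.

End MomentForm.

(** * The weight delta_k *)

Lemma rpow_pos a b : 0 < a -> rpow a b = exp (b * ln a).
Proof. intros H. unfold rpow. destruct (Rle_dec a 0); [lra | reflexivity]. Qed.

Lemma rpow_nonneg a b : 0 <= rpow a b.
Proof.
  unfold rpow. destruct (Rle_dec a 0); [destruct (Req_EM_T b 0); lra|].
  left. apply exp_pos.
Qed.

Lemma rpow_0_l b : b <> 0 -> rpow 0 b = 0.
Proof.
  intros H. unfold rpow. destruct (Rle_dec 0 0); [|lra].
  destruct (Req_EM_T b 0); [contradiction | reflexivity].
Qed.

Lemma delta_0_l t : delta 0 t = 1.
Proof.
  unfold delta, rpow. rewrite Rmult_0_r.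
  destruct (Rle_dec _ 0); [now destruct (Req_EM_T 0 0) | apply Rpower_O; lra].
Qed.

Lemma delta_nonneg k t : 0 <= delta k t.
Proof. apply rpow_nonneg. Qed.

Lemma delta_pos k t : sin t <> 0 -> 0 < delta k t.
Proof.
  intros H. unfold delta. rewrite rpow_pos; [apply exp_pos|]. apply Rabs_pos_lt. lra.
Qed.

Lemma delta_sin_0 k t : 0 < k -> sin t = 0 -> delta k t = 0.
Proof.
  intros Hk H. unfold delta. rewrite H, Rmult_0_r, Rabs_R0. apply rpow_0_l. lra.
Qed.

Lemma delta_exp k t : sin t <> 0 -> delta k t = exp (k * ln ((2 * sin t) ^ 2)).
Proof.
  intros H. unfold delta. rewrite rpow_pos by (apply Rabs_pos_lt; lra).
  rewrite <- (pow2_abs (2 * sin t)), ln_pow by (apply Rabs_pos_lt; lra). simpl. f_equal. ring.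
Qed.

Lemma delta_reflect k t : delta k (2 * PI - t) = delta k t.
Proof.
  unfold delta. rewrite sin_minus, sin_2PI, cos_2PI.
  replace (2 * (0 * cos t - 1 * sin t)) with (- (2 * sin t)) by ring.
  now rewrite Rabs_Ropp.
Qed.

Lemma continuous_rpow_abs k y : 0 < k -> continuous (fun y => rpow (Rabs y) (2 * k)) y.
Proof.
  intros Hk. destruct (Req_dec y 0) as [->|Hy].
  - apply continuity_pt_filterlim. intros eps Heps.
    exists (exp (ln eps / (2 * k))). split; [apply exp_pos|].
    intros y [[_ Hy0] Hy]. simpl in Hy |- *. unfold R_dist in Hy |- *.
    rewrite Rminus_0_r in Hy. rewrite Rabs_R0, rpow_0_l, Rminus_0_r by lra.
    assert (Hay : 0 < Rabs y) by (apply Rabs_pos_lt; auto).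
    rewrite rpow_pos by exact Hay. rewrite Rabs_pos_eq by (left; apply exp_pos).
    rewrite <- (exp_ln eps) by exact Heps. apply exp_increasing.
    apply ln_increasing in Hy; [|exact Hay]. rewrite ln_exp in Hy.
    apply (Rmult_lt_compat_l (2 * k)) in Hy; [|lra].
    replace (2 * k * (ln eps / (2 * k))) with (ln eps) in Hy by (field; lra). lra.
  - apply (continuous_ext_loc _ (fun y => exp (k * ln (y ^ 2)))).
    + assert (H2 : 0 < Rabs y / 2) by (apply Rabs_pos_lt in Hy; lra).
      exists (mkposreal _ H2). intros z Hz. change (Rabs (z - y) < Rabs y / 2) in Hz.
      assert (Hz0 : z <> 0) by (intros ->; rewrite Rminus_0_l, Rabs_Ropp in Hz; lra).
      rewrite rpow_pos by (apply Rabs_pos_lt; auto).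
      rewrite <- (pow2_abs z), ln_pow by (apply Rabs_pos_lt; auto). simpl. f_equal. ring.
    + apply continuity_pt_filterlim, derivable_continuous_pt, ex_derive_Reals_0.
      auto_derive. now apply pow2_gt_0.
Qed.

Lemma continuous_delta k t : 0 <= k -> continuous (delta k) t.
Proof.
  intros Hk. destruct (Req_dec k 0) as [->|Hk0].
  - apply (continuous_ext (fun _ => 1)); [intros; now rewrite delta_0_l|].
    apply continuous_const.
  - apply (continuous_comp (fun t => 2 * sin t) (fun y => rpow (Rabs y) (2 * k))).
    + apply (continuous_scal_r 2 sin), continuous_sin.
    + apply continuous_rpow_abs. lra.
Qed.

Lemma Rabs_sin_le x : Rabs (sin x) <= Rabs x.
Proof.
  assert (Hpos : forall y, 0 < y < 1 -> Rabs (sin y) <= y).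
  { intros y Hy. pose proof PI2_1.
    rewrite Rabs_pos_eq by (left; apply sin_gt_0; lra). left. apply sin_lt_x. lra. }
  destruct (Rle_dec 1 (Rabs x)) as [H|H].
  - eapply Rle_trans; [apply Rabs_le, SIN_bound | exact H].
  - destruct (Rtotal_order x 0) as [Hx|[->|Hx]].
    + rewrite <- (Ropp_involutive x) at 1. rewrite sin_neg, Rabs_Ropp.
      rewrite (Rabs_left x) in H |- * by lra. apply Hpos. lra.
    + rewrite sin_0. lra.
    + rewrite (Rabs_pos_eq x) in H |- * by lra. apply Hpos. lra.
Qed.

Lemma is_derive_mult_vanishing (f g : R -> R) t :
  (forall h, Rabs (f (t + h)) <= Rabs h) -> continuous g t -> g t = 0 ->
  is_derive (fun x => f x * g x) t 0.
Proof.
  intros Hf Hg Hg0. apply is_derive_Reals. intros eps Heps.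
  apply continuity_pt_filterlim in Hg. destruct (Hg eps Heps) as [alp [Halp Hd]].
  exists (mkposreal _ Halp). intros h Hh0 Hh. simpl in Hh.
  assert (Hft : f t = 0).
  { specialize (Hf 0). rewrite Rplus_0_r, Rabs_R0 in Hf.
    destruct (Rcase_abs (f t)); [rewrite Rabs_left in Hf | rewrite Rabs_right in Hf]; lra. }
  assert (Hgh : Rabs (g (t + h)) < eps).
  { rewrite <- (Rminus_0_r (g (t + h))), <- Hg0. apply Hd. split.
    - split; [constructor | intros E; apply Hh0; lra].
    - simpl. unfold R_dist. now replace (t + h - t) with h by ring. }
  assert (Hh' : 0 < Rabs h) by (apply Rabs_pos_lt; auto).
  rewrite Hft, Hg0, Rmult_0_l, !Rminus_0_r. unfold Rdiv.
  rewrite !Rabs_mult, Rabs_inv. apply Rle_lt_trans with (Rabs (g (t + h))); [|exact Hgh].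
  replace (Rabs (f (t + h)) * Rabs (g (t + h)) * / Rabs h)
    with (Rabs (f (t + h)) / Rabs h * Rabs (g (t + h))) by (field; lra).
  rewrite <- (Rmult_1_l (Rabs (g (t + h)))) at 2.
  apply Rmult_le_compat_r; [apply Rabs_pos|].
  apply (Rmult_le_reg_r (Rabs h)); [exact Hh'|]. unfold Rdiv.
  rewrite Rmult_assoc, Rinv_l, Rmult_1_r, Rmult_1_l by lra. apply Hf.
Qed.

Lemma is_derive_sin_delta k t : 0 <= k ->
  is_derive (fun t => sin t * delta k t) t ((2 * k + 1) * delta k t * cos t).
Proof.
  intros [Hk| <-].
  2:{ rewrite delta_0_l. apply (is_derive_ext sin).
      - intros u. now rewrite delta_0_l, Rmult_1_r.
      - replace ((2 * 0 + 1) * 1 * cos t) with (cos t) by ring. apply is_derive_sin. }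
  destruct (Req_dec (sin t) 0) as [Hs|Hs].
  - rewrite delta_sin_0, !Rmult_0_r, Rmult_0_l by assumption.
    apply is_derive_mult_vanishing.
    + intros h. rewrite sin_plus, Hs, Rmult_0_l, Rplus_0_l, Rabs_mult.
      apply Rle_trans with (1 * Rabs (sin h)); [|rewrite Rmult_1_l; apply Rabs_sin_le].
      apply Rmult_le_compat_r; [apply Rabs_pos | apply Rabs_le, COS_bound].
    + apply continuous_delta. lra.
    + now apply delta_sin_0.
  - apply (is_derive_ext (fun t => sin t * exp (k * ln ((2 * sin t) ^ 2)))).
    { intros u. destruct (Req_dec (sin u) 0) as [Hu|Hu].
      - rewrite Hu, delta_sin_0 by assumption. now rewrite !Rmult_0_l.
      - now rewrite delta_exp. }
    rewrite delta_exp by exact Hs. auto_derive.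
    + apply pow2_gt_0. lra.
    + replace (2 * sin t * (2 * sin t * 1)) with ((2 * sin t) ^ 2) by ring.
      field. exact Hs.
Qed.

(** * Moments of delta_k *)

Definition moment (k : R) (m : Z) : R :=
  RInt (fun t => cos (IZR m * t) * delta k t) 0 (2 * PI).

Lemma continuous_trig_delta k (tr : R -> R) a t : 0 <= k ->
  (forall x, continuous tr x) -> continuous (fun t => tr (a * t) * delta k t) t.
Proof.
  intros Hk Htr. apply (continuous_mult (fun t => tr (a * t)) (delta k)).
  - apply (continuous_comp (fun t => a * t) tr); [|apply Htr].
    apply (continuous_mult (fun _ => a) (fun t => t)); [apply continuous_const | apply continuous_id].
  - now apply continuous_delta.
Qed.

Lemma ex_RInt_trig_delta k (tr : R -> R) a : 0 <= k -> (forall x, continuous tr x) ->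
  ex_RInt (fun t => tr (a * t) * delta k t) 0 (2 * PI).
Proof.
  intros Hk Htr. apply (ex_RInt_continuous (V := R_CompleteNormedModule)).
  intros t _. now apply continuous_trig_delta.
Qed.

Lemma moment_opp k m : moment k (- m) = moment k m.
Proof.
  unfold moment. apply RInt_ext. intros t _.
  now rewrite opp_IZR, Ropp_mult_distr_l_reverse, cos_neg.
Qed.

Lemma sin_mult_2PI m : sin (IZR m * (2 * PI)) = 0.
Proof. apply sin_eq_0_1. exists (2 * m)%Z. rewrite mult_IZR. simpl. ring. Qed.

Lemma cos_mult_2PI m : cos (IZR m * (2 * PI)) = 1.
Proof.
  replace (IZR m * (2 * PI)) with (2 * (IZR m * PI)) by ring.
  rewrite cos_2a_sin, sin_eq_0_1; [ring | now exists m].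
Qed.

Lemma RInt_reflect_odd (f : R -> R) a : ex_RInt f 0 a ->
  (forall t, f (a - t) = - f t) -> RInt f 0 a = 0.
Proof.
  intros Hf Hodd.
  assert (H : is_RInt (fun t => scal (-1) (f (-1 * t + a))) 0 a (RInt f a 0)).
  { apply (is_RInt_comp_lin (V := R_NormedModule)).
    replace (-1 * 0 + a) with a by ring. replace (-1 * a + a) with 0 by ring.
    apply (RInt_correct (V := R_CompleteNormedModule)). now apply ex_RInt_swap. }
  apply (is_RInt_ext _ f) in H.
  - apply (is_RInt_unique (V := R_CompleteNormedModule)) in H.
    rewrite <- (opp_RInt_swap (V := R_CompleteNormedModule) f 0 a Hf) in H.
    change (opp (RInt f 0 a)) with (- RInt f 0 a) in H. lra.
  - intros t _. unfold scal. simpl. unfold mult. simpl.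
    replace (-1 * t + a) with (a - t) by ring. rewrite Hodd. ring.
Qed.

Lemma RInt_sin_delta k m : 0 <= k ->
  RInt (fun t => sin (IZR m * t) * delta k t) 0 (2 * PI) = 0.
Proof.
  intros Hk. apply RInt_reflect_odd; [now apply ex_RInt_trig_delta, continuous_sin|].
  intros t. rewrite delta_reflect.
  replace (IZR m * (2 * PI - t)) with (IZR m * (2 * PI) - IZR m * t) by ring.
  rewrite sin_minus, sin_mult_2PI, cos_mult_2PI. ring.
Qed.

Lemma is_RInt_lin2 (f g : R -> R) a b lf lg (c d : R) :
  is_RInt f a b lf -> is_RInt g a b lg ->
  is_RInt (fun t => c * f t + d * g t) a b (c * lf + d * lg).
Proof.
  intros Hf Hg.
  apply (is_RInt_plus (V := R_NormedModule) (fun t => scal c (f t)) (fun t => scal d (g t)));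
    now apply (is_RInt_scal (V := R_NormedModule)).
Qed.

(* Integrate the derivative of 2 sin t delta_k(t) cos(mt), which vanishes at 0 and 2pi. *)
Lemma moment_rec k m : 0 <= k ->
  (2 * k + 1 + IZR m) * moment k (m + 1) + (2 * k + 1 - IZR m) * moment k (m - 1) = 0.
Proof.
  intros Hk.
  set (h := fun t => (2 * k + 1 + IZR m) * cos (IZR (m + 1) * t)
                     + (2 * k + 1 - IZR m) * cos (IZR (m - 1) * t)).
  set (G := fun t => sin t * delta k t * (2 * cos (IZR m * t))).
  assert (HG : forall t, is_derive G t (h t * delta k t)).
  { intros t.
    assert (Hc : is_derive (fun t => 2 * cos (IZR m * t)) t
                   (- 2 * IZR m * sin (IZR m * t))) by (auto_derive; auto; ring).
    replace (h t * delta k t) with ((2 * k + 1) * delta k t * cos t * (2 * cos (IZR m * t))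
                                    + sin t * delta k t * (- 2 * IZR m * sin (IZR m * t))).
    - exact (is_derive_mult _ _ t _ _ (is_derive_sin_delta k t Hk) Hc Rmult_comm).
    - unfold h. rewrite plus_IZR, minus_IZR.
      replace ((IZR m + 1) * t) with (IZR m * t + t) by ring.
      replace ((IZR m - 1) * t) with (IZR m * t - t) by ring.
      rewrite cos_plus, cos_minus. ring. }
  assert (Hcont : forall t, continuous (fun t => h t * delta k t) t).
  { intros t. apply (continuous_mult h (delta k)); [|now apply continuous_delta].
    apply continuity_pt_filterlim, derivable_continuous_pt, ex_derive_Reals_0.
    unfold h. auto_derive. auto. }
  assert (Hzero := is_RInt_derive (V := R_CompleteNormedModule) G (fun t => h t * delta k t)
                     0 (2 * PI) (fun t _ => HG t) (fun t _ => Hcont t)).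
  assert (Hval : is_RInt (fun t => h t * delta k t) 0 (2 * PI)
    ((2 * k + 1 + IZR m) * moment k (m + 1) + (2 * k + 1 - IZR m) * moment k (m - 1))).
  { eapply is_RInt_ext; [|apply is_RInt_lin2; apply (RInt_correct (V := R_CompleteNormedModule));
      apply ex_RInt_trig_delta; auto using continuous_cos].
    intros t _. simpl. unfold h. ring. }
  apply (is_RInt_unique (V := R_CompleteNormedModule)) in Hzero, Hval.
  rewrite <- Hval, Hzero. unfold G, minus, plus, opp. simpl. rewrite sin_2PI, sin_0. ring.
Qed.

Lemma moment_0_l m : moment 0 m = if Z.eq_dec m 0 then 2 * PI else 0.
Proof.
  unfold moment. destruct (Z.eq_dec m 0) as [->|Hm].
  - rewrite (RInt_ext _ (fun _ => 1)), (RInt_const (V := R_CompleteNormedModule)).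
    + unfold scal. simpl. unfold mult. simpl. ring.
    + intros t _. rewrite delta_0_l, Rmult_0_l, cos_0. apply Rmult_1_r.
  - apply (is_RInt_unique (V := R_CompleteNormedModule)).
    assert (Hm' : IZR m <> 0) by now apply not_0_IZR.
    assert (H := is_RInt_derive (V := R_CompleteNormedModule) (fun t => sin (IZR m * t) / IZR m)
                   (fun t => cos (IZR m * t) * delta 0 t) 0 (2 * PI)).
    unfold minus, plus, opp in H. simpl in H.
    rewrite sin_mult_2PI, Rmult_0_r, sin_0 in H.
    replace (0 / IZR m + - (0 / IZR m)) with 0 in H by (field; exact Hm').
    apply H.
    + intros t _. auto_derive; [exact I|]. rewrite delta_0_l. field. exact Hm'.
    + intros t _. apply continuous_trig_delta; [lra | apply continuous_cos].
Qed.

(** * Trigonometric polynomials and definiteness of the moment form *)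

Local Notation CV := C_R_CompleteNormedModule.

Lemma is_RInt_Cmult_l (c : C) (f : R -> C) a b l :
  is_RInt (V := CV) f a b l -> is_RInt (V := CV) (fun t => c * f t)%C a b (c * l)%C.
Proof.
  intros H. destruct c as [c1 c2], l as [l1 l2].
  pose proof (is_RInt_fct_extend_fst _ _ _ _ H) as H1.
  pose proof (is_RInt_fct_extend_snd _ _ _ _ H) as H2. simpl in H1, H2.
  replace ((c1, c2) * (l1, l2))%C with (c1 * l1 + - c2 * l2, c2 * l1 + c1 * l2)
    by (apply injective_projections; simpl; ring).
  apply is_RInt_fct_extend_pair.
  - eapply is_RInt_ext; [|exact (is_RInt_lin2 _ _ _ _ _ _ c1 (- c2) H1 H2)].
    intros t _. simpl. ring.
  - eapply is_RInt_ext; [|exact (is_RInt_lin2 _ _ _ _ _ _ c2 c1 H1 H2)].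
    intros t _. simpl. ring.
Qed.

Lemma is_RInt_C0 x y : is_RInt (V := CV) (fun _ => RtoC 0) x y (RtoC 0).
Proof.
  assert (E : scal (y - x) (RtoC 0) = RtoC 0)
    by (apply injective_projections; apply Rmult_0_r).
  exact (eq_ind _ (fun v => is_RInt (V := CV) (fun _ => RtoC 0) x y v)
    (is_RInt_const (V := CV) x y (RtoC 0)) _ E).
Qed.

Lemma is_RInt_Csum (l : list Z) (b : Z -> C) (h : Z -> R -> C) (v : Z -> C) x y :
  (forall i, In i l -> is_RInt (V := CV) (h i) x y (v i)) ->
  is_RInt (V := CV) (fun t => Csum l (fun i => b i * h i t))%C x y
    (Csum l (fun i => b i * v i))%C.
Proof.
  induction l as [|a l IH]; intros H; simpl; [apply is_RInt_C0|].
  apply (is_RInt_plus (V := CV)).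
  - apply is_RInt_Cmult_l, H. now left.
  - apply IH. intros i Hi. apply H. now right.
Qed.

Lemma is_RInt_cis_delta k m : 0 <= k ->
  is_RInt (V := CV) (fun t => cis (IZR m * t) * RtoC (delta k t))%C 0 (2 * PI)
    (RtoC (moment k m)).
Proof.
  intros Hk.
  replace (RtoC (moment k m)) with
    ((moment k m, RInt (fun t => sin (IZR m * t) * delta k t) 0 (2 * PI)) : C)
    by now rewrite RInt_sin_delta.
  apply is_RInt_fct_extend_pair; simpl.
  - eapply is_RInt_ext; [|apply (RInt_correct (V := R_CompleteNormedModule)),
      ex_RInt_trig_delta; auto using continuous_cos].
    intros t _. simpl. ring.
  - eapply is_RInt_ext; [|apply (RInt_correct (V := R_CompleteNormedModule)),
      ex_RInt_trig_delta; auto using continuous_sin].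
    intros t _. simpl. ring.
Qed.

Definition tpoly (l : list Z) (a : Z -> C) (t : R) : C :=
  Csum l (fun j => a j * cis (IZR j * t))%C.

Lemma is_RInt_tpoly_cis k l a i : 0 <= k ->
  is_RInt (V := CV) (fun t => tpoly l a t * Cconj (cis (IZR i * t)) * RtoC (delta k t))%C
    0 (2 * PI) (Csum l (fun j => a j * RtoC (moment k (j - i))))%C.
Proof.
  intros Hk.
  eapply is_RInt_ext; [|apply (is_RInt_Csum l a
    (fun j t => cis (IZR (j - i) * t) * RtoC (delta k t))%C); intros; now apply is_RInt_cis_delta].
  intros t _. unfold tpoly. rewrite <- !Csum_scal_r. apply Csum_ext_in. intros j _.
  replace (IZR (j - i) * t) with (IZR j * t - IZR i * t) by (rewrite minus_IZR; ring).
  unfold cis, Cconj. apply injective_projections; simpl;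
    rewrite ?cos_minus, ?sin_minus; ring.
Qed.

Definition nmoment (k : R) (m : Z) : C := RtoC (moment k m / (2 * PI)).

Lemma ip_tpoly_cis k l a i : 0 <= k ->
  ip k (tpoly l a) (fun t => cis (IZR i * t)) = Csum l (fun j => a j * nmoment k (j - i))%C.
Proof.
  intros Hk. unfold ip.
  rewrite (is_RInt_unique _ _ _ _ (is_RInt_tpoly_cis k l a i Hk)), <- Csum_scal_l.
  apply Csum_ext_in. intros j _. unfold nmoment, Rdiv. rewrite RtoC_mult. ring.
Qed.

Lemma nmoment_opp k m : nmoment k (- m) = nmoment k m.
Proof. unfold nmoment. now rewrite moment_opp. Qed.

Lemma nmoment_rec k : 0 <= k -> forall m,
  (RtoC (2 * k + 1 + IZR m) * nmoment k (m + 1)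
   + RtoC (2 * k + 1 - IZR m) * nmoment k (m - 1))%C = RtoC 0.
Proof.
  intros Hk m. unfold nmoment. rewrite <- !RtoC_mult, <- RtoC_plus. f_equal.
  unfold Rdiv. rewrite <- !Rmult_assoc, <- Rmult_plus_distr_r, moment_rec by exact Hk.
  ring.
Qed.

Lemma is_RInt_tpoly_norm k l a : 0 <= k ->
  is_RInt (V := CV) (fun t => tpoly l a t * Cconj (tpoly l a t) * RtoC (delta k t))%C
    0 (2 * PI)
    (Csum l (fun i => Cconj (a i) * Csum l (fun j => a j * RtoC (moment k (j - i)))))%C.
Proof.
  intros Hk.
  eapply is_RInt_ext; [|apply (is_RInt_Csum l (fun i => Cconj (a i))
    (fun i t => tpoly l a t * Cconj (cis (IZR i * t)) * RtoC (delta k t))%C);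
    intros; now apply is_RInt_tpoly_cis].
  intros t _. cbv beta.
  replace (Cconj (tpoly l a t)) with (Csum l (fun j => Cconj (a j * cis (IZR j * t))))
    by (unfold tpoly; symmetry; apply Cconj_Csum).
  rewrite <- Csum_scal_l, <- Csum_scal_r.
  apply Csum_ext_in. intros i _. rewrite Cmult_conj. ring.
Qed.

Lemma continuous_nonneg_is_RInt_0 (q : R -> R) a b : a < b ->
  (forall t, a <= t <= b -> continuous q t) -> (forall t, a < t < b -> 0 <= q t) ->
  is_RInt q a b 0 -> forall t, a < t < b -> q t = 0.
Proof.
  intros Hab Hc Hpos HI t0 Ht0.
  destruct (Rle_lt_or_eq_dec 0 (q t0) (Hpos t0 Ht0)) as [Hq|Hq]; [exfalso|auto].
  assert (Hct := Hc t0 ltac:(lra)). apply continuity_pt_filterlim in Hct.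
  destruct (Hct (q t0 / 2) ltac:(lra)) as [eta [Heta Hd]].
  set (e := Rmin (eta / 2) (Rmin ((t0 - a) / 2) ((b - t0) / 2))).
  assert (He : 0 < e) by (unfold e; repeat apply Rmin_pos; lra).
  assert (He1 : e <= eta / 2) by apply Rmin_l.
  assert (He2 : e <= (t0 - a) / 2) by (eapply Rle_trans; [apply Rmin_r | apply Rmin_l]).
  assert (He3 : e <= (b - t0) / 2) by (eapply Rle_trans; [apply Rmin_r | apply Rmin_r]).
  assert (Hex : forall u v, a <= u -> u <= v -> v <= b -> ex_RInt q u v).
  { intros u v Hu Huv Hv. apply (ex_RInt_continuous (V := R_CompleteNormedModule)).
    intros z Hz. apply Hc. rewrite Rmin_left, Rmax_right in Hz by lra. lra. }
  assert (I1 : 0 <= RInt q a (t0 - e))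
    by (apply RInt_ge_0; [lra | apply Hex; lra | intros; apply Hpos; lra]).
  assert (I3 : 0 <= RInt q (t0 + e) b)
    by (apply RInt_ge_0; [lra | apply Hex; lra | intros; apply Hpos; lra]).
  assert (I2 : 0 < RInt q (t0 - e) (t0 + e)).
  { apply RInt_gt_0; [lra| |intros; apply Hc; lra].
    intros x Hx. destruct (Req_dec x t0) as [->|Hxt]; [exact Hq|].
    assert (H' : Rabs (q x - q t0) < q t0 / 2).
    { apply Hd. split; [split; [constructor | auto] | simpl; unfold R_dist; apply Rabs_def1; lra]. }
    apply Rabs_def2 in H'. lra. }
  assert (E1 := RInt_Chasles (V := R_CompleteNormedModule) q a (t0 - e) (t0 + e)
                  ltac:(apply Hex; lra) ltac:(apply Hex; lra)).
  assert (E2 := RInt_Chasles (V := R_CompleteNormedModule) q a (t0 + e) b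
                  ltac:(apply Hex; lra) ltac:(apply Hex; lra)).
  apply (is_RInt_unique (V := R_CompleteNormedModule)) in HI.
  unfold plus in E1, E2. simpl in E1, E2. change (RInt q a b = 0) in HI. lra.
Qed.

Lemma continuous_tpoly l a t :
  continuous (fun t => fst (tpoly l a t)) t /\ continuous (fun t => snd (tpoly l a t)) t.
Proof.
  induction l as [|j l [IH1 IH2]]; [split; apply continuous_const|].
  assert (Htrig : forall c s : R,
    continuous (fun t => c * cos (IZR j * t) + s * sin (IZR j * t)) t).
  { intros c s. apply continuity_pt_filterlim, derivable_continuous_pt, ex_derive_Reals_0.
    auto_derive. exact I. }
  split.
  - apply (continuous_ext (fun t => (fst (a j) * cos (IZR j * t) + - snd (a j) * sin (IZR j * t))
                                     + fst (tpoly l a t))).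
    + intros u. unfold tpoly. simpl. ring.
    + apply (continuous_plus (fun t => fst (a j) * cos (IZR j * t) + - snd (a j) * sin (IZR j * t))
               (fun t => fst (tpoly l a t))); auto.
  - apply (continuous_ext (fun t => (snd (a j) * cos (IZR j * t) + fst (a j) * sin (IZR j * t))
                                     + snd (tpoly l a t))).
    + intros u. unfold tpoly. simpl. ring.
    + apply (continuous_plus (fun t => snd (a j) * cos (IZR j * t) + fst (a j) * sin (IZR j * t))
               (fun t => snd (tpoly l a t))); auto.
Qed.

Lemma tpoly_coeff_eq_0 l a i : NoDup l -> In i l ->
  (forall t, 0 < t < 2 * PI -> t <> PI -> tpoly l a t = RtoC 0) -> a i = RtoC 0.
Proof.
  intros Hnd Hi Hvan. pose proof PI_RGT_0 as Hpi.
  set (g := fun t => (tpoly l a t * Cconj (cis (IZR i * t)) * RtoC (delta 0 t))%C).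
  assert (Hhalf : forall x y, 0 <= x -> x < y -> y <= 2 * PI ->
                  PI <= x \/ y <= PI -> is_RInt (V := CV) g x y (RtoC 0)).
  { intros x y Hx Hxy Hy Hside. eapply is_RInt_ext; [|apply is_RInt_C0].
    intros t Ht. rewrite Rmin_left, Rmax_right in Ht by lra.
    unfold g. rewrite Hvan by lra. now rewrite !Cmult_0_l. }
  assert (HI := is_RInt_Chasles (V := CV) g 0 PI (2 * PI) _ _
                  (Hhalf 0 PI ltac:(lra) ltac:(lra) ltac:(lra) ltac:(lra))
                  (Hhalf PI (2 * PI) ltac:(lra) ltac:(lra) ltac:(lra) ltac:(lra))).
  assert (HM := is_RInt_tpoly_cis 0 l a i (Rle_refl 0)). fold g in HM.
  apply (is_RInt_unique (V := CV)) in HI, HM. rewrite HM in HI.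
  rewrite (Csum_single l _ i Hnd Hi) in HI.
  - rewrite moment_0_l, Z.sub_diag in HI. simpl in HI.
    assert (H2PI : RtoC (2 * PI) <> RtoC 0)
      by (intros H; apply RtoC_inj in H; lra).
    assert (HI' : (a i * RtoC (2 * PI))%C = RtoC 0)
      by (rewrite HI; apply injective_projections; apply Rplus_0_r).
    transitivity (a i * RtoC (2 * PI) / RtoC (2 * PI))%C; [field; exact H2PI|].
    rewrite HI'. unfold Cdiv. ring.
  - intros j _ Hj. rewrite moment_0_l. destruct (Z.eq_dec (j - i) 0); [lia | ring].
Qed.

Lemma sin_neq_0_open t : 0 < t < 2 * PI -> t <> PI -> sin t <> 0.
Proof.
  intros Ht Htpi. destruct (Rlt_or_le t PI).
  - apply Rgt_not_eq, sin_gt_0; lra.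
  - apply Rlt_not_eq, sin_lt_0; lra.
Qed.

Lemma tpoly_norm_is_RInt_0 k l a : 0 <= k ->
  (forall i, In i l ->
     a i = RtoC 0 \/ Csum l (fun j => a j * nmoment k (j - i))%C = RtoC 0) ->
  is_RInt (fun t => (fst (tpoly l a t) ^ 2 + snd (tpoly l a t) ^ 2) * delta k t)
    0 (2 * PI) 0.
Proof.
  intros Hk Horth. assert (Hnorm := is_RInt_tpoly_norm k l a Hk).
  rewrite Csum_eq_0 in Hnorm.
  - eapply is_RInt_ext; [|exact (is_RInt_fct_extend_fst _ _ _ _ Hnorm)].
    intros x _. simpl. destruct (tpoly l a x) as [u v]. simpl. ring.
  - intros m Hm. destruct (Horth m Hm) as [H0|H0].
    + rewrite H0. apply injective_projections; simpl; ring.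
    + replace (Csum l (fun j => a j * RtoC (moment k (j - m))))%C
        with (RtoC (2 * PI) * Csum l (fun j => a j * nmoment k (j - m)))%C.
      * rewrite H0. ring.
      * rewrite <- Csum_scal_l. apply Csum_ext_in. intros j _. unfold nmoment.
        transitivity (a j * RtoC (2 * PI * (moment k (j - m) / (2 * PI))))%C.
        -- rewrite (RtoC_mult (2 * PI)). ring.
        -- do 2 f_equal. field. apply PI_neq0.
Qed.

(* The form is int |tpoly|^2 delta_k, and delta_k > 0 off the zeros of sin. *)
Lemma nmoment_definite k l a : 0 <= k -> NoDup l ->
  (forall i, In i l ->
     a i = RtoC 0 \/ Csum l (fun j => a j * nmoment k (j - i))%C = RtoC 0) ->
  forall i, In i l -> a i = RtoC 0.
Proof.
  intros Hk Hnd Horth i Hi. apply (tpoly_coeff_eq_0 l a i Hnd Hi). intros t Ht Htpi.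
  set (F := tpoly l a).
  set (q := fun t => (fst (F t) ^ 2 + snd (F t) ^ 2) * delta k t).
  assert (Hqt : q t = 0).
  { apply (continuous_nonneg_is_RInt_0 q 0 (2 * PI));
      [pose proof PI_RGT_0; lra | | | exact (tpoly_norm_is_RInt_0 k l a Hk Horth) | exact Ht].
    - intros x _. destruct (continuous_tpoly l a x) as [Hre Him].
      apply (continuous_mult (fun x => fst (F x) ^ 2 + snd (F x) ^ 2) (delta k));
        [|now apply continuous_delta].
      assert (Hsq : forall y, continuous (fun y => y ^ 2) y)
        by (intros y; apply continuity_pt_filterlim, derivable_continuous_pt, derivable_pt_pow).
      apply (continuous_plus (fun x => fst (F x) ^ 2) (fun x => snd (F x) ^ 2));
        [apply (continuous_comp (fun x => fst (F x)) (fun y => y ^ 2)) |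
         apply (continuous_comp (fun x => snd (F x)) (fun y => y ^ 2))]; auto.
    - intros x _. unfold q. apply Rmult_le_pos; [nra | apply delta_nonneg]. }
  assert (Hd := delta_pos k t (sin_neq_0_open t Ht Htpi)).
  unfold q in Hqt. fold F. destruct (F t) as [u v]. simpl in Hqt.
  assert (Huv : u ^ 2 + v ^ 2 = 0) by (apply (Rmult_eq_reg_r (delta k t)); lra).
  apply injective_projections; simpl; nra.
Qed.

(** * Coefficients of E_n^k *)

Definition ho_coeff (n : Z) (c : Z -> C) (j : Z) : C :=
  if (j =? n)%Z then RtoC 1 else if tri j n then c j else RtoC 0.

Lemma ho_coeff_sum n c (b : Z -> C) :
  (b n + Csum (below n) (fun j => c j * b j))%C
  = Csum (zrange n) (fun j => ho_coeff n c j * b j)%C.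
Proof.
  rewrite below_zrange, Csum_filter, <- (Csum_zrange_single n n b) by lia.
  rewrite <- Csum_plus. apply Csum_ext_in. intros j _. unfold ho_coeff.
  destruct (Z.eqb_spec j n) as [->|]; [rewrite tri_refl|destruct (tri j n)]; ring.
Qed.

Definition HO_coeffs (k : R) (n : Z) (e : Z -> C) : Prop :=
  e n = RtoC 1 /\ (forall j, j <> n -> tri j n = false -> e j = RtoC 0) /\
  (forall i, tri i n = true -> gram_at (nmoment k) n e i = RtoC 0).

Lemma IsHO_coeffs k n E : 0 <= k -> IsHO k n E ->
  exists e : Z -> C, HO_coeffs k n e /\
    forall x, E x = Csum (zrange n) (fun j => e j * RtoC (exp (IZR j * x)))%C.
Proof.
  intros Hk [c [HE Horth]]. exists (ho_coeff n c). split; [split; [|split]|].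
  - unfold ho_coeff. now rewrite Z.eqb_refl.
  - intros j Hjn Htj. unfold ho_coeff. now rewrite (proj2 (Z.eqb_neq j n) Hjn), Htj.
  - intros i Hi. unfold gram_at. rewrite <- (Horth i Hi), <- (ip_tpoly_cis k _ _ _ Hk).
    f_equal. apply functional_extensionality. intros t.
    symmetry. exact (ho_coeff_sum n c (fun j => cis (IZR j * t))).
  - intros x. rewrite HE. exact (ho_coeff_sum n c (fun j => RtoC (exp (IZR j * x)))).
Qed.

Lemma IsHO_0 k E : IsHO k 0 E -> forall x, E x = RtoC 1.
Proof.
  intros [c [HE _]] x. rewrite HE, Rmult_0_l, exp_0. cbn [below Csum]. simpl. ring.
Qed.

Lemma ho_reflection_coeffs k n e em : 0 <= k -> (0 < n)%Z ->
  HO_coeffs k n e -> HO_coeffs k (- n) em ->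
  forall j, In j (zrange n) -> em j = (e (- j)%Z + RtoC (k / (IZR n + k)) * e j)%C.
Proof.
  intros Hk Hn [He1 [He0 Heo]] [Hm1 [Hm0 Hmo]].
  unfold gram_at in Hmo. rewrite zrange_opp in Hmo.
  assert (Hnk : IZR n + k <> 0) by (apply IZR_lt in Hn; simpl in Hn; lra).
  set (f := fun j => (e (- j)%Z + RtoC (k / (IZR n + k)) * e j - em j)%C).
  assert (Hf : forall j, In j (zrange n) -> f j = RtoC 0).
  { apply (nmoment_definite k _ f Hk (NoDup_zrange n)). intros i Hi.
    destruct (tri i (- n)) eqn:Hti.
    - right. change (gram_at (nmoment k) n f i = RtoC 0).
      transitivity (gram_at (nmoment k) n
                      (fun j => e (- j)%Z + RtoC (k / (IZR n + k)) * e j)%C i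
                    - gram_at (nmoment k) n em i)%C.
      { unfold gram_at, Cminus. rewrite <- Csum_opp, <- Csum_plus.
        apply Csum_ext_in. intros j _. unfold f. ring. }
      rewrite (reflection_orth k (nmoment k) (nmoment_opp k) (nmoment_rec k Hk) n Hn e
                 He0 He1 Heo Hnk i Hti).
      unfold gram_at. rewrite Hmo by exact Hti. ring.
    - left. unfold f. pose proof Hti as Hti'.
      rewrite tri_opp_pos in Hti' by exact Hn.
      apply orb_false_iff in Hti' as [Htn Hin]. apply Z.eqb_neq in Hin.
      destruct (Z.eq_dec i (- n)) as [->|Hin'].
      + rewrite Z.opp_involutive, He1, Hm1, (He0 (- n)%Z); [ring | lia |].
        now rewrite tri_opp_l, tri_refl.
      + rewrite (He0 (- i)%Z), (He0 i), (Hm0 i); try ring; try lia; try assumption.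
        now rewrite tri_opp_l. }
  intros j Hj. specialize (Hf j Hj). unfold f in Hf.
  rewrite <- (Cplus_0_r (em j)), <- Hf. ring.
Qed.

Lemma ho_reflection k n E Em : 0 <= k -> (0 < n)%Z -> IsHO k n E -> IsHO k (- n) Em ->
  forall y, Em y = (E (- y)%R + RtoC (k / (IZR n + k)) * E y)%C.
Proof.
  intros Hk Hn HE HEm y.
  destruct (IsHO_coeffs k n E Hk HE) as [e [He HEe]].
  destruct (IsHO_coeffs k (- n) Em Hk HEm) as [em [Hem HEme]].
  rewrite HEme, zrange_opp, !HEe, <- Csum_scal_l.
  rewrite <- (Csum_zrange_opp n (fun j => e j * RtoC (exp (IZR j * - y)))%C), <- Csum_plus.
  apply Csum_ext_in. intros j Hj. cbv beta.
  rewrite (ho_reflection_coeffs k n e em Hk Hn He Hem j Hj), opp_IZR.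
  replace (- IZR j * - y) with (IZR j * y) by ring. ring.
Qed.

Theorem mainTheorem4 (k : R) (n : Z) (E Em : R -> C) :
  0 <= k -> (0 <= n)%Z -> 0 < IZR n + k ->
  IsHO k n E -> IsHO k (- n) Em ->
  forall x : R,
    Cmult (RtoC (1 - k ^ 2 / (IZR n + k) ^ 2)) (E x)
    = Cminus (Em (- x)) (Cmult (RtoC (k / (IZR n + k))) (Em x)).
Proof.
  intros Hk Hn Hnk HE HEm x.
  destruct (Z.eq_dec n 0) as [->|Hn0].
  - change (- 0)%Z with 0%Z in HEm. simpl in Hnk.
    rewrite (IsHO_0 k E HE), !(IsHO_0 k Em HEm).
    replace (1 - k ^ 2 / (0 + k) ^ 2) with 0 by (field; lra).
    replace (k / (0 + k)) with 1 by (field; lra). ring.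
  - rewrite !(ho_reflection k n E Em Hk ltac:(lia) HE HEm), Ropp_involutive.
    replace (RtoC (1 - k ^ 2 / (IZR n + k) ^ 2))
      with (RtoC 1 - RtoC (k / (IZR n + k)) * RtoC (k / (IZR n + k)))%C.
    + ring.
    + rewrite <- RtoC_mult, <- RtoC_minus. f_equal. field. lra.
Qed.
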